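(* Let $\lambda, r, k$ be positive integers. Let $s_k(n,b)$ be the number of $r$-canonical secondary structures with minimum arc-length $\lambda$ on $n$ vertices having exactly $b$ rainbows of length $k$, and let $\mathbf{S}_k(x,u)=\sum_{n,b}s_k(n,b)x^nu^b$. Then $$\mathbf{S}_k(x,u)=\frac{1}{1-\mathbf{F}(x)-(u-1)f(k+1)x^{k+1}},$$ where $f(m)$ is the number of irreducible such structures on $m$ vertices and $\mathbf{F}(x)=\sum_{m\ge1}f(m)x^m$.
   Context: A diagram on $n$ vertices $1,\dots,n$ ($n\ge0$) is a set of arcs $(i,j)$ with $1\le i<j\le n$ such that no two arcs share an endpoint and no two arcs cross (there are no arcs $(i_1,j_1),(i_2,j_2)$ with $i_1<i_2<j_1<j_2$). The length of an arc $(i,j)$ is $j-i$. A stack is a maximal sequence of arcs $(i,j),(i+1,j-1),\dots,(i+s-1,j-s+1)$ of the diagram; $s$ is its length. An $r$-canonical secondary structure with minimum arc-length $\lambda$ is a diagram in which every arc has length at least $\lambda$ and every stack has length at least $r$ (the empty structure on $0$ vertices is counted). A rainbow is an arc $(i,j)$ maximal for the partial order $(i,j)\preceq(i',j')\iff i'\le i<j\le j'$. A structure is irreducible if it is the single vertex with no arcs ($n=1$) or it contains the arc $(1,n)$. *)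

From mathcomp Require Import all_boot all_order all_algebra.
Set Implicit Arguments. Unset Strict Implicit. Unset Printing Implicit Defensive.
Import GRing.Theory.

(* Vertices 1..n are encoded 0-based as elements of 'I_n (vertex v+1 <-> v).
   A diagram on n vertices is a set A of pairs (i,j) in 'I_n * 'I_n. *)

Section Diagrams.
Variable n : nat.
Implicit Type A : {set 'I_n * 'I_n}.

Definition arc A (i j : nat) : bool :=
  [exists a in A, (val a.1 == i) && (val a.2 == j)].

Definition is_diagram A : bool :=
  [forall a in A, val a.1 < val a.2] &&
  [forall a in A, forall a' in A, (a != a') ==>
     [&& a.1 != a'.1, a.1 != a'.2, a.2 != a'.1 & a.2 != a'.2]] &&
  [forall a in A, forall a' in A,
     ~~ [&& val a.1 < val a'.1, val a'.1 < val a.2 & val a.2 < val a'.2]].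

Definition min_arc_length (lam : nat) A : bool :=
  [forall a in A, lam <= val a.2 - val a.1].

Definition is_stack A (i j s : nat) : bool :=
  [&& 0 < s, [forall t : 'I_s, arc A (i + t) (j - t)],
      (0 < i) ==> ~~ arc A i.-1 j.+1 & ~~ arc A (i + s) (j - s)].

(* every stack has length at least r.  A stack starting at arc (i,j) has
   i, j < n and length s <= n, so quantifying over i j : 'I_n and
   s : 'I_n.+1 ranges over all stacks. *)
Definition r_canonical (r : nat) A : bool :=
  [forall i : 'I_n, forall j : 'I_n, forall s : 'I_n.+1,
     is_stack A i j s ==> (r <= s)].

Definition sec_str (lam r : nat) A : bool :=
  [&& is_diagram A, min_arc_length lam A & r_canonical r A].

Definition rainbow A (a : 'I_n * 'I_n) : bool :=
  (a \in A) &&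
  [forall a' in A, ((val a'.1 <= val a.1) && (val a.2 <= val a'.2)) ==> (a' == a)].

Definition nrainbows (k : nat) A : nat :=
  #|[set a in A | rainbow A a && (val a.2 - val a.1 == k)]|.

Definition irreducible A : bool := ((n == 1) && (A == set0)) || arc A 0 n.-1.

End Diagrams.

Definition s_count (lam r k n b : nat) : nat :=
  #|[set A : {set 'I_n * 'I_n} |
       sec_str lam r A && (nrainbows k A == b)]|.

Definition f_count (lam r m : nat) : nat :=
  #|[set A : {set 'I_m * 'I_m} | sec_str lam r A && irreducible A]|.

Local Open Scope ring_scope.

(* Bivariate series are elements of {poly {poly int}}: outer variable x,
   inner variable u.  Truncations at x-degree N: *)
Definition uvar : {poly {poly int}} := ('X : {poly int})%:P.

Definition S_trunc (lam r k N : nat) : {poly {poly int}} :=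
  \sum_(n < N.+1) \sum_(b < n.+1)
     ((s_count lam r k n b)%:R *: ('X^b : {poly int}))%:P * 'X^n.

Definition F_trunc (lam r N : nat) : {poly {poly int}} :=
  \sum_(1 <= m < N.+1) (f_count lam r m)%:R * 'X^m.

(* A nonempty structure splits uniquely after its first block: vertex 1 together
   with its partner j (or j = 1 if vertex 1 is unpaired) spans an irreducible
   structure on [1, j], followed by an arbitrary structure on the remaining n - j
   vertices.  Arc lengths and stacks are local to the two pieces, and the rainbows
   of the whole are the arc (1, j), of length k exactly when j = k + 1, together
   with the rainbows of the rest.  Hence, for n > 0,
     s_k(n, u) = sum_j f(j) u^[j = k+1] s_k(n - j, u),
   that is S = 1 + (F + (u - 1) f(k+1) x^(k+1)) S. *)

From mathcomp Require Import all_boot all_order all_algebra zify ring.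
From Stdlib Require Import FunctionalExtensionality.
Set Implicit Arguments. Unset Strict Implicit. Unset Printing Implicit Defensive.
Import GRing.Theory.

(* Structures are also viewed as arc relations on nat, so that cutting and
   gluing them only shifts indices instead of changing ordinal types. *)
Definition diagram_rel (R : rel nat) :=
  [/\ forall x y, R x y -> x < y,
      forall x y x' y', R x y -> R x' y' ->
        [|| x == x', x == y', y == x' | y == y'] -> x = x' /\ y = y' &
      forall x y x' y', R x y -> R x' y' -> ~~ [&& x < x', x' < y & y < y']].

Definition min_arc_length_rel lam (R : rel nat) := forall x y, R x y -> lam <= y - x.

Definition is_stack_rel (R : rel nat) (i j s : nat) : bool :=
  [&& 0 < s, [forall t : 'I_s, R (i + t) (j - t)],
      (0 < i) ==> ~~ R i.-1 j.+1 & ~~ R (i + s) (j - s)].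

Definition r_canonical_rel r (R : rel nat) :=
  forall i j s, is_stack_rel R i j s -> r <= s.

Definition sec_str_rel lam r R :=
  [/\ diagram_rel R, min_arc_length_rel lam R & r_canonical_rel r R].

Lemma is_stack_rel_head R i j s : is_stack_rel R i j s -> R i j.
Proof. by case/and4P=> s0 /forallP /(_ (Ordinal s0)); rewrite addn0 subn0. Qed.

Section ArcRelation.
Variable n : nat.
Implicit Type A : {set 'I_n * 'I_n}.

Lemma arcP A x y :
  reflect (exists2 a : 'I_n * 'I_n, (a \in A) & (val a.1 = x /\ val a.2 = y)) (arc A x y).
Proof.
apply: (iffP existsP) => [[a /andP[aA /andP[/eqP <- /eqP <-]]]|[a aA [<- <-]]].
  by exists a.
by exists a; rewrite aA !eqxx.
Qed.

Lemma arc_in A (a : 'I_n * 'I_n) : arc A a.1 a.2 = (a \in A).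
Proof.
apply/arcP/idP => [[b bA [e1 e2]]|]; last by exists a.
by rewrite [a]surjective_pairing -(val_inj e1) -(val_inj e2) -surjective_pairing.
Qed.

Lemma arc_bound A x y : arc A x y -> x < n /\ y < n.
Proof. by case/arcP=> a _ [<- <-]; split; apply: ltn_ord. Qed.

Lemma arc_inj A A' : arc A =2 arc A' -> A = A'.
Proof. by move=> eAA'; apply/setP => a; rewrite -!arc_in eAA'. Qed.

Lemma arc_set0 x y : arc (set0 : {set 'I_n * 'I_n}) x y = false.
Proof. by apply/arcP => -[a]; rewrite in_set0. Qed.

Lemma ord_pair_inj (a a' : 'I_n * 'I_n) :
  val a.1 = val a'.1 -> val a.2 = val a'.2 -> a = a'.
Proof. by case: a a' => [a1 a2] [b1 b2] /= /val_inj-> /val_inj->. Qed.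

Lemma is_diagramP A : reflect (diagram_rel (arc A)) (is_diagram A).
Proof.
rewrite /is_diagram -andbA.
apply: (iffP and3P) => [[/forall_inP D1 /forall_inP D2 /forall_inP D3]|[D1 D2 D3]].
  split.
  - by move=> x y /arcP[a aA [<- <-]]; apply: D1.
  - move=> x y x' y' /arcP[a aA [<- <-]] /arcP[a' a'A [<- <-]] shared.
    case: (eqVneq a a') => [-> //|ne].
    move/forall_inP/(_ a' a'A)/implyP/(_ ne): (D2 a aA).
    rewrite -!val_eqE /= => /and4P[/negPf e1 /negPf e2 /negPf e3 /negPf e4].
    by rewrite e1 e2 e3 e4 in shared.
  - move=> x y x' y' /arcP[a aA [<- <-]] /arcP[a' a'A [<- <-]].
    by move/forall_inP: (D3 a aA); apply.
split.
- by apply/forall_inP => a aA; apply: D1; rewrite arc_in.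
- apply/forall_inP => a aA; apply/forall_inP => a' a'A; apply/implyP => ne.
  rewrite -!val_eqE /=; apply/negPn/negP; rewrite !negb_and !negbK => shared.
  have [e1 e2] := D2 _ _ _ _ (etrans (arc_in A a) aA) (etrans (arc_in A a') a'A) shared.
  by rewrite (ord_pair_inj e1 e2) eqxx in ne.
- by apply/forall_inP => a aA; apply/forall_inP => a' a'A; apply: D3; rewrite arc_in.
Qed.

Lemma min_arc_lengthP lam A :
  reflect (min_arc_length_rel lam (arc A)) (min_arc_length lam A).
Proof.
apply: (iffP forall_inP) => [Hm x y /arcP[a aA [<- <-]]|Hm a aA]; first exact: Hm.
by apply: Hm; rewrite arc_in.
Qed.

Lemma is_stack_rel_bound A i j s :
  is_stack_rel (arc A) i j s -> [/\ i < n, j < n & s < n.+1].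
Proof.
move=> st; have [hi hj] := arc_bound (is_stack_rel_head st).
have [s0 /forallP last_arc _ _] := and4P st.
have s1 : s.-1 < s by rewrite ltn_predL.
have [/= hs _] := arc_bound (last_arc (Ordinal s1)).
split=> //=; lia.
Qed.

Lemma r_canonicalP r A : reflect (r_canonical_rel r (arc A)) (r_canonical r A).
Proof.
apply: (iffP forallP) => [Hr i j s st|Hr i].
  have [hi hj hs] := is_stack_rel_bound st.
  move/forallP/(_ (Ordinal hj))/forallP/(_ (Ordinal hs)): (Hr (Ordinal hi)).
  by move/implyP; apply.
by apply/forallP => j; apply/forallP => s; apply/implyP; apply: Hr.
Qed.

Lemma sec_strP lam r A : reflect (sec_str_rel lam r (arc A)) (sec_str lam r A).
Proof.
apply: (iffP and3P) => [[/is_diagramP ? /min_arc_lengthP ? /r_canonicalP ?]|[]] //.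
by move=> /is_diagramP ? /min_arc_lengthP ? /r_canonicalP.
Qed.

End ArcRelation.

Definition rcat (RB RC : rel nat) j : rel nat :=
  fun x y => if y < j then RB x y else (j <= x) && RC (x - j) (y - j).

Section RelConcat.
Variables (RB RC : rel nat) (j : nat).
Hypothesis RB_bound : forall x y, RB x y -> x < j /\ y < j.
Local Notation R := (rcat RB RC j).

Lemma RB_outside x y : (j <= x) || (j <= y) -> RB x y = false.
Proof. by move=> out; apply/negP => /RB_bound; lia. Qed.

Lemma rcat_l x y : RB x y -> R x y.
Proof. by move=> h; have [_ hy] := RB_bound h; rewrite /rcat hy. Qed.

Lemma rcat_shift a b : R (j + a) (j + b) = RC a b.
Proof. by rewrite /rcat ltnNge leq_addr /= leq_addr /= !addKn. Qed.

Lemma rcat_cases x y : R x y ->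
  [/\ RB x y, x < j & y < j] \/ exists a b, [/\ x = j + a, y = j + b & RC a b].
Proof.
rewrite /rcat; case: ltnP => hy.
  by move=> h; left; have [? ?] := RB_bound h.
by case/andP => hx h; right; exists (x - j), (y - j); split => //; lia.
Qed.

Lemma rcat_cross x y : x < j <= y -> R x y = false.
Proof. by case/andP=> hx hy; rewrite /rcat ltnNge hy /= leqNgt hx. Qed.

Lemma rcat_same_side x y : R x y -> (x < j) = (y < j).
Proof. by case/rcat_cases => [[_ -> ->]|[a [b [-> -> _]]]] //; lia. Qed.

Lemma diagram_rcat : diagram_rel R <-> diagram_rel RB /\ diagram_rel RC.
Proof.
split=> [[D1 D2 D3]|[[B1 B2 B3] [C1 C2 C3]]].
  split; split.
  - by move=> x y /rcat_l; apply: D1.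
  - by move=> x y x' y' /rcat_l h /rcat_l; apply: D2.
  - by move=> x y x' y' /rcat_l h /rcat_l; apply: D3.
  - by move=> x y; have := D1 (j + x) (j + y); rewrite rcat_shift ltn_add2l.
  - move=> x y x' y' h h'.
    have := D2 (j + x) (j + y) (j + x') (j + y'); rewrite !rcat_shift !eqn_add2l.
    by move=> /(_ h h') shared /shared [/addnI-> /addnI->].
  - move=> x y x' y'.
    by have := D3 (j + x) (j + y) (j + x') (j + y'); rewrite !rcat_shift !ltn_add2l.
split.
- move=> x y /rcat_cases [[/B1 //]|[a [b [-> -> /C1]]]]; lia.
- move=> x y x' y' /rcat_cases [[h hx hy]|[a [b [-> -> h]]]]
                   /rcat_cases [[h' hx' hy']|[a' [b' [-> -> h']]]]; try lia.
  + exact: B2.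
  + by rewrite !eqn_add2l => /(C2 _ _ _ _ h h') [-> ->].
- move=> x y x' y' /rcat_cases [[h hx hy]|[a [b [-> -> h]]]]
                   /rcat_cases [[h' hx' hy']|[a' [b' [-> -> h']]]].
  + exact: B3.
  + by apply/negP; lia.
  + by apply/negP; lia.
  + by rewrite !ltn_add2l; apply: C3.
Qed.

Lemma min_arc_length_rcat lam :
  min_arc_length_rel lam R <-> min_arc_length_rel lam RB /\ min_arc_length_rel lam RC.
Proof.
split=> [Hm|[Bm Cm] x y /rcat_cases [[/Bm //]|[a [b [-> -> /Cm]]]]]; last by rewrite subnDl.
split=> [x y /rcat_l /Hm //|x y].
by have := Hm (j + x) (j + y); rewrite rcat_shift subnDl.
Qed.

Hypothesis j_gt0 : 0 < j.

Section NoArcEndingAtZero.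
Hypothesis RC0 : forall z, RC z 0 = false.

Lemma rcat_low x y : y <= j -> R x y = RB x y.
Proof.
rewrite /rcat; case: ltnP => // hy hy'.
by rewrite (_ : y - j = 0) ?RC0 ?andbF ?RB_outside ?hy ?orbT //; lia.
Qed.

Lemma rcat_shift_sub a b t : R (j + a) (j + b - t) = RC a (b - t).
Proof.
case: (leqP t b) => tb; first by rewrite -addnBA // rcat_shift.
rewrite (_ : b - t = 0) ?RC0; last lia.
by rewrite rcat_low ?RB_outside ?leq_addr //; lia.
Qed.

Lemma is_stack_rcat_l x y s : y < j -> is_stack_rel R x y s = is_stack_rel RB x y s.
Proof.
move=> hy; rewrite /is_stack_rel; congr [&& _, _, _ & _].
- by apply: eq_forallb => t; rewrite rcat_low //; lia.
- by rewrite rcat_low.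
- by rewrite rcat_low //; lia.
Qed.

Lemma is_stack_rcat_r x y s :
  is_stack_rel R (j + x) (j + y) s = is_stack_rel RC x y s.
Proof.
rewrite /is_stack_rel; congr [&& _, _, _ & _].
- by apply: eq_forallb => t; rewrite -addnA rcat_shift_sub.
- case: x => [|x]; last by rewrite addnS /= -addnS rcat_shift.
  by rewrite addn0 j_gt0 rcat_cross //; lia.
- by rewrite -addnA rcat_shift_sub.
Qed.

End NoArcEndingAtZero.

Lemma r_canonical_rcat r : (forall z, RC z 0 = false) ->
  r_canonical_rel r R <-> r_canonical_rel r RB /\ r_canonical_rel r RC.
Proof.
move=> RC0; split=> [Hr|[Br Cr] x y s].
  split=> [x y s st|x y s]; last by have := Hr (j + x) (j + y) s; rewrite is_stack_rcat_r.
  have [_ hy] := RB_bound (is_stack_rel_head st).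
  by apply: (Hr x y); rewrite is_stack_rcat_l.
case: (ltnP y j) => hy; first by rewrite is_stack_rcat_l //; apply: Br.
case: (ltnP x j) => hx st.
  by move: (is_stack_rel_head st); rewrite rcat_cross // hx hy.
by move: st; rewrite -(subnKC hx) -(subnKC hy) is_stack_rcat_r //; apply: Cr.
Qed.

Lemma sec_str_rcat lam r :
  sec_str_rel lam r R <-> sec_str_rel lam r RB /\ sec_str_rel lam r RC.
Proof.
have RC0 (DC : diagram_rel RC) z : RC z 0 = false.
  by case: DC => C1 _ _; apply/negP => /C1.
split=> [[D Hm Hr]|[[DB Bm Br] [DC Cm Cr]]].
  have [DB DC] := diagram_rcat.1 D.
  have [Bm Cm] := (min_arc_length_rcat lam).1 Hm.
  have [Br Cr] := (r_canonical_rcat r (RC0 DC)).1 Hr.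
  by split; split.
split; first exact/diagram_rcat.
  exact/min_arc_length_rcat.
exact/(r_canonical_rcat r (RC0 DC)).
Qed.

End RelConcat.

Definition nest_maximal (R : rel nat) x y :=
  forall x' y', R x' y' -> x' <= x -> y <= y' -> x' = x /\ y' = y.

Definition rainbow_rel N (R : rel nat) x y :=
  R x y && [forall x' : 'I_N, forall y' : 'I_N,
    [&& R x' y', x' <= x & y <= y'] ==> (x' == x :> nat) && (y' == y :> nat)].

Definition nrainbows_rel k N (R : rel nat) :=
  \sum_(x < N) \sum_(y < N) (rainbow_rel N R x y && (y - x == k)).

Lemma rainbow_relP N (R : rel nat) x y :
  (forall x y, R x y -> x < N /\ y < N) ->
  reflect (R x y /\ nest_maximal R x y) (rainbow_rel N R x y).
Proof.
move=> R_bound; apply: (iffP andP) => [[Rxy /forallP max]|[Rxy max]]; split=> //.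
  move=> x' y' Rxy' hx hy; have [bx by'] := R_bound _ _ Rxy'.
  move/forallP/(_ (Ordinal by')): (max (Ordinal bx)).
  by rewrite /= Rxy' hx hy => /andP[/eqP-> /eqP->].
apply/forallP => x'; apply/forallP => y'; apply/implyP => /and3P[Rxy' hx hy].
by have [-> ->] := max _ _ Rxy' hx hy; rewrite !eqxx.
Qed.

Lemma rainbowP n (A : {set 'I_n * 'I_n}) (a : 'I_n * 'I_n) :
  reflect (arc A a.1 a.2 /\ nest_maximal (arc A) a.1 a.2) (rainbow A a).
Proof.
apply: (iffP andP) => [[aA /forall_inP max]|[Aa max]]; split.
- by rewrite arc_in.
- move=> x' y' /arcP [a' a'A [<- <-]] hx hy.
  by move/implyP: (max a' a'A); rewrite hx hy => /(_ isT)/eqP->.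
- by rewrite -arc_in.
apply/forall_inP => a' a'A; apply/implyP => /andP[hx hy].
have [e1 e2] := max _ _ (etrans (arc_in A a') a'A) hx hy.
by rewrite (ord_pair_inj e1 e2).
Qed.

Lemma nrainbowsE k n (A : {set 'I_n * 'I_n}) :
  nrainbows k A = nrainbows_rel k n (arc A).
Proof.
rewrite /nrainbows /nrainbows_rel -sum1_card big_mkcond /= pair_big /=.
apply: eq_bigr => -[x y] _; rewrite inE /=.
rewrite andbA.
have -> : ((x, y) \in A) && rainbow A (x, y) = rainbow_rel n (arc A) x y.
  rewrite andb_idl; last by case/andP.
  by apply/rainbowP/(rainbow_relP _ _ (@arc_bound _ A)).
by case: (_ && _).
Qed.

Lemma sum_ord_eq_mul N a (F : nat -> nat) :
  a < N -> \sum_(i < N) (i == a :> nat) * F i = F a.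
Proof.
move=> aN; rewrite (bigD1 (Ordinal aN)) //= eqxx mul1n big1 ?addn0 // => i.
by rewrite -val_eqE => /negPf ->.
Qed.

Section RelConcatRainbows.
Variables (RB RC : rel nat) (j m : nat).
Hypothesis RB_bound : forall x y, RB x y -> x < j /\ y < j.
Hypothesis RC_bound : forall x y, RC x y -> x < m /\ y < m.
Local Notation R := (rcat RB RC j).

Lemma rcat_bound x y : R x y -> x < j + m /\ y < j + m.
Proof. by case/(rcat_cases RB_bound) => [[_ ? ?]|[a [b [-> -> /RC_bound]]]]; lia. Qed.

Lemma rainbow_rcat_shift a b :
  rainbow_rel (j + m) R (j + a) (j + b) = rainbow_rel m RC a b.
Proof.
apply/(rainbow_relP _ _ rcat_bound)/(rainbow_relP _ _ RC_bound); rewrite rcat_shift.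
  case=> Rab max; split=> // x' y' Rxy' hx hy.
  have := max (j + x') (j + y'); rewrite rcat_shift !leq_add2l => /(_ Rxy' hx hy).
  by case=> /addnI-> /addnI->.
case=> Rab max; split=> // x' y'.
case/(rcat_cases RB_bound) => [[_ hx' hy']|[a' [b' [-> -> Rab']]]]; first by lia.
by rewrite !leq_add2l => hx hy; have [-> ->] := max _ _ Rab' hx hy.
Qed.

Lemma rainbow_rcat_cross N x y : (x < j) != (y < j) -> rainbow_rel N R x y = false.
Proof.
by move=> side; apply/negP => /andP[/(rcat_same_side RB_bound) e _]; rewrite e eqxx in side.
Qed.

Hypothesis D : diagram_rel (rcat RB RC j).
Hypothesis RB_irreducible : 1 < j -> RB 0 j.-1.

Lemma rainbow_rcat_low x y : x < j -> y < j ->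
  rainbow_rel (j + m) R x y = [&& x == 0, y == j.-1 & 1 < j].
Proof.
case: D => D1 D2 _ hx hy.
apply/(rainbow_relP _ _ rcat_bound)/and3P => [[Rxy max]|[/eqP-> /eqP-> j_gt1]].
  have j_gt1 : 1 < j by have := D1 _ _ Rxy; lia.
  have hy' : y <= j.-1 by lia.
  have [<- <-] := max _ _ (rcat_l RC RB_bound (RB_irreducible j_gt1)) (leq0n x) hy'.
  by rewrite !eqxx j_gt1.
have R0 := rcat_l RC RB_bound (RB_irreducible j_gt1).
split=> // x' y' Rxy'; rewrite leqn0 => /eqP x'0 _.
by have := D2 _ _ _ _ R0 Rxy'; rewrite x'0 eqxx => /(_ isT) [_ <-].
Qed.

Hypothesis j_gt0 : 0 < j.

(* For k = 0 the arc-less one-vertex block (j = 1) would be counted as a rainbow. *)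
Lemma nrainbows_rcat k : 0 < k ->
  nrainbows_rel k (j + m) R = (j == k.+1) + nrainbows_rel k m RC.
Proof.
move=> k_gt0; rewrite /nrainbows_rel big_split_ord /=; congr (_ + _).
  have low_term (x : 'I_j) y : (rainbow_rel (j + m) R x y && (y - x == k) : nat) =
      (x == 0 :> nat) * ((y == j.-1 :> nat) * (j == k.+1)).
    rewrite !mulnb; case: (ltnP y j) => hy; last first.
      by rewrite rainbow_rcat_cross ?ltn_ord ?(ltnNge y) ?hy //; lia.
    rewrite rainbow_rcat_low //.
    by case: (val x =P 0) => [->|] //; case: (y =P j.-1) => [->|] //=; lia.
  under eq_bigr => x _ do under eq_bigr => y _ do rewrite low_term.
  under eq_bigr => x _ do rewrite -big_distrr /=.
  rewrite (sum_ord_eq_mul (fun=> _)) // (sum_ord_eq_mul (fun=> _)) //; lia.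
apply: eq_bigr => x _; rewrite big_split_ord /= big1 ?add0n => [|y _].
  by apply: eq_bigr => y _; rewrite rainbow_rcat_shift subnDl.
by rewrite rainbow_rcat_cross // ltn_ord ltnNge leq_addr.
Qed.

End RelConcatRainbows.

Definition concat n j m (B : {set 'I_j * 'I_j}) (C : {set 'I_m * 'I_m}) :
  {set 'I_n * 'I_n} := [set a : 'I_n * 'I_n | rcat (arc B) (arc C) j a.1 a.2].
Definition split_l n j (A : {set 'I_n * 'I_n}) : {set 'I_j * 'I_j} :=
  [set a : 'I_j * 'I_j | arc A a.1 a.2].
Definition split_r n j m (A : {set 'I_n * 'I_n}) : {set 'I_m * 'I_m} :=
  [set a : 'I_m * 'I_m | arc A (j + a.1) (j + a.2)].
Arguments concat n {j m} B C.
Arguments split_l {n} j A.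
Arguments split_r {n} j m A.

Lemma arc_concat n j m (B : {set 'I_j * 'I_j}) (C : {set 'I_m * 'I_m}) :
  j + m <= n -> arc (concat n B C) = rcat (arc B) (arc C) j.
Proof.
move=> jmn; apply: functional_extensionality => x.
apply: functional_extensionality => y.
apply/arcP/idP => [[a]|Rxy]; first by rewrite inE => Ra [<- <-].
have [bx by'] := rcat_bound (@arc_bound _ B) (@arc_bound _ C) Rxy.
have [bx' by''] : x < n /\ y < n by lia.
by exists (Ordinal bx', Ordinal by''); rewrite ?inE.
Qed.

Lemma arc_split_l n j (A : {set 'I_n * 'I_n}) x y :
  arc (split_l j A) x y = [&& x < j, y < j & arc A x y].
Proof.
apply/arcP/and3P => [[a]|[hx hy Axy]].
  by rewrite inE => Aa [<- <-]; split; rewrite ?ltn_ord.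
by exists (Ordinal hx, Ordinal hy); rewrite ?inE.
Qed.

Lemma arc_split_r n j m (A : {set 'I_n * 'I_n}) x y :
  arc (split_r j m A) x y = [&& x < m, y < m & arc A (j + x) (j + y)].
Proof.
apply/arcP/and3P => [[a]|[hx hy Axy]].
  by rewrite inE => Aa [<- <-]; split; rewrite ?ltn_ord.
by exists (Ordinal hx, Ordinal hy); rewrite ?inE.
Qed.

Lemma split_concat n j m (B : {set 'I_j * 'I_j}) (C : {set 'I_m * 'I_m}) :
  j + m <= n -> (split_l j (concat n B C), split_r j m (concat n B C)) = (B, C).
Proof.
move=> jmn; congr pair; apply: arc_inj => x y.
  rewrite arc_split_l arc_concat //; case: (ltnP y j) => hy.
    rewrite /rcat hy; apply/and3P/idP => [[] //|Bxy].
    by have [] := arc_bound Bxy.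
  by rewrite andbF; apply/esym/negbTE/negP => /arc_bound []; lia.
rewrite arc_split_r arc_concat // rcat_shift.
by apply/and3P/idP => [[] //|Cxy]; have [] := arc_bound Cxy.
Qed.

Section FirstBlock.
Variable n : nat.
Implicit Type A : {set 'I_n * 'I_n}.

Definition first_block_size A : nat :=
  if [pick y : 'I_n | arc A 0 y] is Some y then (val y).+1 else 1.

Lemma first_block_size_cases A :
  (exists2 y, arc A 0 y & first_block_size A = y.+1) \/
  (first_block_size A = 1 /\ forall y, ~~ arc A 0 y).
Proof.
rewrite /first_block_size; case: pickP => [y A0y|noarc]; first by left; exists y.
right; split=> // y; apply/negP => A0y; have [_ hy] := arc_bound A0y.
by move: (noarc (Ordinal hy)); rewrite /= A0y.
Qed.

Lemma first_block_size_arc A y :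
  diagram_rel (arc A) -> arc A 0 y -> first_block_size A = y.+1.
Proof.
case=> _ D2 _ A0y; case: (first_block_size_cases A) => [[y' A0y' ->]|[_ noarc]].
  by have := D2 _ _ _ _ A0y' A0y; rewrite eqxx => /(_ isT) [_ ->].
by move: (noarc y); rewrite A0y.
Qed.

Lemma first_block_size_bound A : 0 < n -> 0 < first_block_size A <= n.
Proof.
by move=> n_gt0; case: (first_block_size_cases A) => [[y /arc_bound [_ hy] ->]|[-> _]]; lia.
Qed.

Lemma arc_beyond_first_block A x y : diagram_rel (arc A) -> arc A x y ->
  first_block_size A <= y -> first_block_size A <= x.
Proof.
case=> D1 D2 D3 Axy; case: (first_block_size_cases A) => [[y0 A0y0 ->]|[-> noarc]] hy.
  case: (ltnP y0 x) => // hx.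
  case: (posnP x) => [x0|x_gt0].
    move: Axy; rewrite x0 => A0y.
    by have := D2 _ _ _ _ A0y0 A0y; rewrite eqxx => /(_ isT) [_]; lia.
  case: (eqVneq x y0) => [e|ne].
    by have := D2 _ _ _ _ A0y0 Axy; rewrite e eqxx !orbT => /(_ isT) [e1 _]; lia.
  by case/negP: (D3 _ _ _ _ A0y0 Axy); apply/and3P; split; lia.
case: (posnP x) => [x0|//]; move: Axy; rewrite x0 => A0y.
by move: (noarc y); rewrite A0y.
Qed.

Lemma concat_split A j : diagram_rel (arc A) -> first_block_size A = j -> j <= n ->
  concat n (split_l j A) (split_r j (n - j) A) = A.
Proof.
move=> D fbA jn; have [D1 _ _] := D.
apply: arc_inj => x y; rewrite arc_concat ?subnKC // /rcat arc_split_l arc_split_r.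
case: (ltnP y j) => hy.
  by apply/and3P/idP => [[] //|Axy]; have := D1 _ _ Axy; split=> //; lia.
apply/andP/idP => [[hx /and3P[_ _]]|Axy]; first by rewrite !subnKC.
have [bx by'] := arc_bound Axy.
have hx : j <= x by rewrite -fbA (arc_beyond_first_block D Axy) ?fbA.
by split=> //; apply/and3P; split; rewrite ?subnKC //; lia.
Qed.

End FirstBlock.

Lemma irreducible_diagram j (B : {set 'I_j * 'I_j}) :
  diagram_rel (arc B) -> irreducible B = (j == 1) || arc B 0 j.-1.
Proof.
case=> D1 _ _; rewrite /irreducible; case: eqP => [j1|//]; subst j.
have -> : B = set0.
  apply/setP => -[a b]; rewrite in_set0 -arc_in /= (ord1 a) (ord1 b).
  by apply/negbTE/negP => /D1.
by rewrite eqxx.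
Qed.

Section SetConcat.
Variables (n j m : nat) (B : {set 'I_j * 'I_j}) (C : {set 'I_m * 'I_m}).
Hypotheses (j_gt0 : 0 < j) (jmn : j + m = n).
Let arc_concatE := arc_concat B C (eq_leq jmn).

Lemma sec_str_concat lam r :
  sec_str lam r (concat n B C) = sec_str lam r B && sec_str lam r C.
Proof.
apply/sec_strP/andP; rewrite arc_concatE (sec_str_rcat _ (@arc_bound _ B) j_gt0).
all: by case=> /sec_strP ? /sec_strP ?.
Qed.

Lemma first_block_size_concat : diagram_rel (arc (concat n B C)) ->
  (first_block_size (concat n B C) == j) = irreducible B.
Proof.
move=> D; move: (D); rewrite arc_concatE => /(diagram_rcat _ (@arc_bound _ B)) [DB _].
have arc_concat0 y : arc (concat n B C) 0 y = (y < j) && arc B 0 y.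
  by rewrite arc_concatE /rcat; case: ltnP; rewrite ?leqn0 ?andbF //; lia.
rewrite irreducible_diagram //; case B0: (arc B 0 j.-1).
  rewrite (first_block_size_arc D (y := j.-1)) ?prednK ?orbT ?eqxx //.
  by rewrite arc_concat0 B0 ltn_predL j_gt0.
case: (first_block_size_cases (concat n B C)) => [[y]|[-> noarc]]; last by rewrite orbF.
rewrite arc_concat0 => /andP[hy B0y] ->; rewrite orbF.
have y_not_last : y <> j.-1 by move=> e; rewrite -e B0y in B0.
by apply/eqP/eqP; lia.
Qed.

Lemma sec_str_first_block_concat lam r :
  sec_str lam r (concat n B C) && (first_block_size (concat n B C) == j) =
  (sec_str lam r B && irreducible B) && sec_str lam r C.
Proof.
rewrite andbAC -sec_str_concat; apply: andb_id2l => /sec_strP[D _ _].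
exact: first_block_size_concat.
Qed.

Lemma nrainbows_concat k : 0 < k ->
  diagram_rel (arc B) -> irreducible B -> diagram_rel (arc C) ->
  nrainbows k (concat n B C) = (j == k.+1) + nrainbows k C.
Proof.
move=> k_gt0 DB irrB DC; have B_bound := @arc_bound _ B.
rewrite !nrainbowsE arc_concatE -jmn nrainbows_rcat //; try exact: arc_bound.
- exact/diagram_rcat.
- by move=> j_gt1; move: irrB; rewrite irreducible_diagram // gtn_eqF.
Qed.

End SetConcat.

Lemma nrainbows_le k n (A : {set 'I_n * 'I_n}) :
  diagram_rel (arc A) -> nrainbows k A <= n.
Proof.
case=> _ D2 _; rewrite /nrainbows; set S := [set a in A | _].
have inj_fst : {in S &, injective (fun a : 'I_n * 'I_n => a.1)}.
  move=> a a'; rewrite !inE => /andP[aA _] /andP[a'A _] e1.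
  have := D2 _ _ _ _ (etrans (arc_in A a) aA) (etrans (arc_in A a') a'A).
  by rewrite e1 eqxx => /(_ isT) [_ e2]; apply: ord_pair_inj; rewrite ?e1.
by rewrite -(card_in_imset inj_fst) (leq_trans (max_card _)) ?card_ord.
Qed.

Lemma f_count0 lam r : f_count lam r 0 = 0.
Proof.
apply/eqP; rewrite cards_eq0; apply/eqP/setP => A; rewrite !inE /irreducible /=.
by rewrite (_ : arc A 0 0 = false) ?andbF //; apply/negbTE/negP => /arc_bound [].
Qed.

Local Open Scope ring_scope.

Lemma sum_partition_ord (R : nmodType) (T : finType) (P : pred T) (g : T -> nat)
    (F : T -> R) N :
  (forall x, P x -> (g x < N)%N) ->
  \sum_(x | P x) F x = \sum_(b < N) \sum_(x | P x && (g x == b)) F x.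
Proof.
move=> g_bound; under [RHS]eq_bigr => b _ do rewrite big_mkcondr /=.
rewrite exchange_big /=; apply: eq_bigr => x Px; rewrite -big_mkcond /=.
rewrite (eq_bigl (fun b : 'I_N => b == g x :> nat)) => [|b]; last by rewrite eq_sym.
by rewrite (big_ord1_eq _ (fun=> F x)) g_bound.
Qed.

Section RainbowPolynomial.
Variables lam r k : nat.
Hypothesis k_gt0 : (0 < k)%N.

Definition rainbow_poly n : {poly int} :=
  \sum_(A : {set 'I_n * 'I_n} | sec_str lam r A) 'X^(nrainbows k A).

Definition block_weight j : {poly int} := (f_count lam r j)%:R * 'X^(j == k.+1).

Lemma block_weight0 : block_weight 0 = 0.
Proof. by rewrite /block_weight f_count0 mul0r. Qed.

Lemma rainbow_poly0 : rainbow_poly 0 = 1.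
Proof.
rewrite /rainbow_poly (big_pred1 set0) => [|A].
  by rewrite nrainbowsE /nrainbows_rel big_ord0 expr0.
have -> : A = set0 by apply/setP => -[[x x_lt0] y]; exfalso; rewrite ltn0 in x_lt0.
rewrite /= eqxx; apply/sec_strP.
split; [split| |] => [x y|x y x' y'|x y x' y'|x y|x y s]; rewrite ?arc_set0 //.
by move/is_stack_rel_head; rewrite arc_set0.
Qed.

Lemma rainbow_poly_first_block i j : (0 < j <= i)%N ->
  \sum_(A : {set 'I_i * 'I_i} | sec_str lam r A && (first_block_size A == j))
     'X^(nrainbows k A) = block_weight j * rainbow_poly (i - j).
Proof.
case/andP=> j_gt0 ji; have jmi : (j + (i - j))%N = i by rewrite subnKC.
rewrite (reindex_onto (fun p : {set 'I_j * 'I_j} * {set 'I_(i - j) * 'I_(i - j)} =>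
    concat i p.1 p.2) (fun A => (split_l j A, split_r j (i - j) A))) /=; last first.
  by move=> A /andP[/sec_strP[D _ _] /eqP fbA]; apply: concat_split.
rewrite (eq_bigl (fun p => (sec_str lam r p.1 && irreducible p.1) && sec_str lam r p.2));
  last by case=> B C /=; rewrite split_concat ?jmi // eqxx andbT sec_str_first_block_concat.
rewrite (eq_bigr (fun p => 'X^(j == k.+1) * 'X^(nrainbows k p.2))); last first.
  move=> [B C] /andP[/andP[/sec_strP[DB _ _] irrB] /sec_strP[DC _ _]] /=.
  by rewrite nrainbows_concat // exprD.
rewrite -(pair_big (fun B => sec_str lam r B && irreducible B) (sec_str lam r)
  (fun _ C => 'X^(j == k.+1) * 'X^(nrainbows k C))) /=.
rewrite /block_weight /f_count -sum1_card natr_sum -mulrA big_distrl /=.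
apply: eq_big => [B|B _]; first by rewrite inE.
by rewrite mul1r /rainbow_poly big_distrr.
Qed.

Lemma rainbow_poly_rec i : (0 < i)%N ->
  rainbow_poly i = \sum_(j < i.+1) block_weight j * rainbow_poly (i - j).
Proof.
move=> i_gt0; have fb_bound := first_block_size_bound _ i_gt0.
rewrite /rainbow_poly (@sum_partition_ord _ _ _ (@first_block_size i) _ i.+1); last first.
  by move=> A _; have := fb_bound A; lia.
apply: eq_bigr => -[j /= ji] _; case: (posnP j) => [->|j_gt0].
  rewrite block_weight0 mul0r big_pred0 // => A.
  by have := fb_bound A; case: eqP; rewrite ?andbF //; lia.
by rewrite rainbow_poly_first_block // j_gt0.
Qed.

End RainbowPolynomial.

Section PowerSeries.
Variables lam r k : nat.
Hypothesis k_gt0 : (0 < k)%N.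
Local Notation rainbow_poly := (rainbow_poly lam r k).
Local Notation block_weight := (block_weight lam r k).

Lemma coef_S_trunc N i : (i <= N)%N -> (S_trunc lam r k N)`_i = rainbow_poly i.
Proof.
move=> iN; rewrite /S_trunc coef_sum.
under eq_bigr => n _.
  rewrite coef_sum; under eq_bigr => b _ do rewrite coefCM coefXn.
  rewrite -big_distrl /=.
  over.
rewrite (bigD1 (Ordinal (iN : i < N.+1)%N)) //= eqxx mulr1 [X in _ + X]big1 ?addr0 => [|n];
  last by rewrite -val_eqE eq_sym => /negPf /= ->; rewrite mulr0.
rewrite /rainbow_poly (@sum_partition_ord _ _ _ (nrainbows k) _ i.+1); last first.
  by move=> A /sec_strP[D _ _]; rewrite ltnS nrainbows_le.
apply: eq_bigr => b _; rewrite /s_count scaler_nat -sumr_const.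
by apply: eq_big => [A|A]; rewrite inE // => /andP[_ /eqP ->].
Qed.

Lemma coef_denominator N i : (i <= N)%N ->
  (1 - F_trunc lam r N - (uvar - 1) * (f_count lam r k.+1)%:R * 'X^(k.+1))`_i =
  (i == 0%N)%:R - block_weight i.
Proof.
move=> iN; rewrite !coefB coef1.
have -> : (F_trunc lam r N)`_i = if (0 < i)%N then (f_count lam r i)%:R else 0.
  rewrite /F_trunc coef_sum.
  under eq_bigr => m _ do rewrite -polyC_natr coefCM coefXn mulr_natr eq_sym mulrb.
  by rewrite -big_mkcond big_nat1_eq ltnS iN andbT.
rewrite /uvar -polyC_natr -polyC1 -polyCB -polyCM coefCM coefXn /block_weight.
case: i iN => [|i] iN /=; first by rewrite f_count0; ring.
by case: (eqVneq i k) => [->|ne]; rewrite ?eqxx ?eqSS ?(negPf ne) /=; ring.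
Qed.

Lemma rainbow_poly_convolution i : (0 < i)%N ->
  \sum_(j < i.+1) rainbow_poly j * block_weight (i - j) = rainbow_poly i.
Proof.
move=> i_gt0; rewrite (rainbow_poly_rec lam r k_gt0 i_gt0).
rewrite -(big_mkord xpredT (fun j => rainbow_poly j * block_weight (i - j))).
rewrite -(big_mkord xpredT (fun j => block_weight j * rainbow_poly (i - j))).
rewrite big_nat_rev /=; apply: eq_big_nat => j /andP[_ ji].
by rewrite add0n subSS subKn 1?mulrC.
Qed.

End PowerSeries.

Theorem lemma2 (lam r k : nat) (hlam : (0 < lam)%N) (hr : (0 < r)%N)
    (hk : (0 < k)%N) :
  forall N i : nat, (i <= N)%N ->
    (S_trunc lam r k N *
       (1 - F_trunc lam r N
          - (uvar - 1) * (f_count lam r k.+1)%:R * 'X^(k.+1)))`_i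
    = (i == 0%N)%:R.
Proof.
move=> N i iN; rewrite coefM.
rewrite (eq_bigr (fun j : 'I_i.+1 => rainbow_poly lam r k j * (i - j == 0)%N%:R -
    rainbow_poly lam r k j * block_weight lam r k (i - j))) => [|j _]; last first.
  by rewrite coef_S_trunc ?coef_denominator ?mulrBr //; have := ltn_ord j; lia.
rewrite sumrB big_ord_recr /= subnn mulr1 big1 ?add0r => [|j _]; last first.
  by rewrite subn_eq0 leqNgt ltn_ord mulr0.
case: (posnP i) => [->|i_gt0]; last by rewrite rainbow_poly_convolution ?subrr.
by rewrite big_ord1 block_weight0 mulr0 subr0 rainbow_poly0.
Qed.
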